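(* For every $j\in\{1,\dots,N\}$ with $S_j\neq\emptyset$ (i.e. $S_j=(U_j^*,c_j^* )$), we have $\sum_{(U,c)\in S^*_{j-1}}p_1^{(j)}(U,c)\ge p_2^{(j-1)}(U_j^*,c_j^* )$.
   Context: Setup as for problem (P1): users $\{1,\dots,K\}$ partitioned into groups $\mathcal G_1,\dots,\mathcal G_L$; $N$ RBs; chunks are vectors $c\in\{0,1\}^N$ whose ones form a nonempty contiguous block, ${\rm Tail}(c)$ the last index of $c$, chunks intersect if they share an index; $\mathcal U$ = nonempty $U\subseteq\{1,\dots,K\}$ with $|U|\le T$, $|U\cap\mathcal G_s|\le1\ \forall s$; pairs are elements of $\mathcal U\times\mathcal C$. Metrics $p\ge0$; weights $\beta^q\in[0,1]$ ($q=1,\dots,J$); binary weights $\alpha^q\in\{0,1\}$ ($q\in\mathcal I$). A set $F$ of pairs is feasible if each group meets $U$ for at most one element of $F$, each RB lies in $c$ for at most one element, $\sum_F\beta^q\le1$ ($q\le J$) and $\sum_F\alpha^q\le1$ ($q\in\mathcal I$). Pairs $(U,c),(U',c')$ conflict if some group meets both $U,U'$, or $c,c'$ intersect, or some $q\in\mathcal I$ has $\alpha^q(U,c)=\alpha^q(U',c')=1$. $\mathcal M^{\rm narrow}$ = pairs with $\beta^q\le1/2$ for all $q\le J$; $\max_q\beta^q:=0$ if $J=0$; $(x)^+=\max\{x,0\}$. Recursion: $p_2^{(0)}=p$ on $\mathcal M^{\rm narrow}$. For $j=1,\dots,N$: let $(U_j^*,c_j^* )$ maximize $p_2^{(j-1)}$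 over pairs of $\mathcal M^{\rm narrow}$ with ${\rm Tail}(c)=j$; set $S_j=(U_j^*,c_j^* )$ if $p_2^{(j-1)}(U_j^*,c_j^* )>0$ and $S_j=\emptyset$ otherwise. Define, for $(U,c)\in\mathcal M^{\rm narrow}$, $p_1^{(j)}(U,c)=(p_2^{(j-1)}(U_j^*,c_j^* ))^+\mathbf 1[p_2^{(j-1)}(U,c)>0]$ if $(U,c)$ conflicts with $(U_j^*,c_j^* )$, and $p_1^{(j)}(U,c)=2(p_2^{(j-1)}(U_j^*,c_j^* ))^+\mathbf 1[p_2^{(j-1)}(U,c)>0]\max_{q\le J}\beta^q(U,c)$ otherwise; and $p_2^{(j)}=p_2^{(j-1)}-p_1^{(j)}$. Stacks: $S_N^*=\emptyset$ and for $j=N,\dots,1$, $S_{j-1}^*=S_j^*\cup\{S_j\}$ if $S_j\neq\emptyset$ and $S_j^*\cup\{S_j\}$ is feasible, else $S_{j-1}^*=S_j^*$. *)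

From HB Require Import structures.
From mathcomp Require Import all_boot all_order all_algebra.
Set Implicit Arguments. Unset Strict Implicit. Unset Printing Implicit Defensive.
Import Order.TTheory GRing.Theory Num.Theory.
Local Open Scope ring_scope.

(* Conventions:
   - users are 'I_K, groups are 'I_L, group membership is given by
     grp : 'I_K -> 'I_L (G_s = [set u | grp u == s]);
   - RBs are 'I_N; RB index i : 'I_N is the paper's RB i+1;
   - a chunk is represented by its support set c : {set 'I_N} (the set of
     indices where the 0/1 vector is 1);
   - a pair is an element of {set 'I_K} * {set 'I_N}; valid_pair says it
     lies in U x C;
   - beta : 'I_J -> pair -> R (q = 1..J), alpha : I -> pair -> bool
     (binary weights, q in the finite index set I). *)

Section Defs.
Variables (R : realFieldType) (K L N T J : nat) (I : finType).
Variable grp : 'I_K -> 'I_L.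
Variable p : {set 'I_K} * {set 'I_N} -> R.
Variable beta : 'I_J -> {set 'I_K} * {set 'I_N} -> R.
Variable alpha : I -> {set 'I_K} * {set 'I_N} -> bool.

Definition pairT := ({set 'I_K} * {set 'I_N})%type.

Definition meets (U : {set 'I_K}) (s : 'I_L) : bool := [exists u in U, grp u == s].

Definition valid_users (U : {set 'I_K}) : bool :=
  [&& U != set0, (#|U| <= T)%N & [forall s : 'I_L, (#|U :&: [set u | grp u == s]| <= 1)%N]].

Definition contiguous (c : {set 'I_N}) : bool :=
  [forall i in c, forall k in c, forall m : 'I_N, ((i <= m) && (m <= k))%N ==> (m \in c)].

Definition is_chunk (c : {set 'I_N}) : bool := (c != set0) && contiguous c.

(* Tail(c) in the paper's 1-based numbering *)
Definition tail (c : {set 'I_N}) : nat := (\max_(i in c) i.+1)%N.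

Definition valid_pair (x : pairT) : bool := valid_users x.1 && is_chunk x.2.

Definition narrow (x : pairT) : bool :=
  valid_pair x && [forall q : 'I_J, beta q x <= 1 / 2%:R].

Definition maxbeta (x : pairT) : R := \big[Num.max/0]_(q < J) beta q x.

Definition conflict (x y : pairT) : bool :=
  [|| [exists s : 'I_L, meets x.1 s && meets y.1 s],
      [exists i : 'I_N, (i \in x.2) && (i \in y.2)] |
      [exists q : I, alpha q x && alpha q y]].

Definition feasible (F : {set pairT}) : bool :=
  [&& [forall x in F, valid_pair x],
      [forall s : 'I_L, (#|[set x in F | meets x.1 s]| <= 1)%N],
      [forall i : 'I_N, (#|[set x in F | i \in x.2]| <= 1)%N],
      [forall q : 'I_J, \sum_(x in F) beta q x <= 1] &
      [forall q : I, (#|[set x in F | alpha q x]| <= 1)%N]].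

Definition posp (a : R) : R := Num.max a 0.
Definition ind (b : bool) : R := if b then 1 else 0.

(* sel j = (U_j^star, c_j^star), the chosen maximizer at step j (j = 1..N). *)
Variable sel : nat -> pairT.

(* p_1^{(j)} computed from f = p_2^{(j-1)} and s = (U_j^star, c_j^star) *)
Definition p1step (f : pairT -> R) (s x : pairT) : R :=
  if conflict x s then posp (f s) * ind (0 < f x)
  else 2%:R * posp (f s) * ind (0 < f x) * maxbeta x.

Fixpoint p2 (j : nat) : pairT -> R :=
  match j with
  | 0 => p
  | j'.+1 => fun x => p2 j' x - p1step (p2 j') (sel j'.+1) x
  end.

Definition p1 (j : nat) (x : pairT) : R := p1step (p2 j.-1) (sel j) x.

Definition S_nonempty (j : nat) : bool := 0 < p2 j.-1 (sel j).

(* stk m = Sstar_{N-m}, for m <= N *)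
Fixpoint stk (m : nat) : {set pairT} :=
  match m with
  | 0 => set0
  | m'.+1 =>
      let j := (N - m')%N in
      if S_nonempty j && feasible (sel j |: stk m') then sel j |: stk m'
      else stk m'
  end.

Definition Sstar (i : nat) : {set pairT} := stk (N - i).

End Defs.

From mathcomp Require Import all_boot all_order all_algebra.
From mathcomp Require Import zify lra.
Set Implicit Arguments. Unset Strict Implicit. Unset Printing Implicit Defensive.
Import Order.TTheory GRing.Theory Num.Theory.
Local Open Scope ring_scope.

(* Proof of Lemma 1.  Write f = p_2^(j-1) and let s = S_j be the pair
   selected at step j, so that f s > 0.  The stack S^*_{j-1} is either
   s |: S^*_j (when adding s is feasible) or S^*_j, and every element of
   S^*_j was selected at a later step k > j with p_2^(k-1) > 0 on it; since p_2 only decreases along the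
   recursion, f > 0 on all of S^*_j.  Hence on S^*_{j-1} the value p_1^(j) x
   equals f s when x conflicts with s, and 2 f(s) maxbeta(x) otherwise.
   Three cases:
   - s was pushed: s conflicts with itself, so the term of s alone is f s;
   - some x in S^*_j conflicts with s: its term alone is f s;
   - s conflicts with nothing in S^*_j and was still rejected: adding a
     conflict-free narrow pair to a feasible set can only break a weight
     constraint, so some q has sum_(S^*_j) beta^q > 1/2, and then
     sum p_1^(j) >= 2 f(s) sum beta^q > f s. *)

Lemma card_setU1_le1 (T0 : finType) (y : T0) (S : {set T0}) (P : pred T0) :
  (P y -> forall x, x \in S -> ~~ P x) -> (#|[set x in S | P x]| <= 1)%N ->
  (#|[set x in y |: S | P x]| <= 1)%N.
Proof.
move=> excl leS; case Py: (P y).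
  rewrite -(cards1 y); apply: subset_leq_card; apply/subsetP => x.
  rewrite !inE => /andP[/orP[/eqP->|xS] Px]; first by rewrite eqxx.
  by have := excl Py x xS; rewrite Px.
apply: leq_trans leS; apply: subset_leq_card; apply/subsetP => x.
rewrite !inE => /andP[/orP[/eqP->|xS] Px]; first by rewrite Py in Px.
by rewrite xS Px.
Qed.

Lemma ler_sum_mem (R : numDomainType) (T0 : finType) (A : {set T0})
    (F : T0 -> R) x :
  (forall y, 0 <= F y) -> x \in A -> F x <= \sum_(y in A) F y.
Proof. by move=> F_ge0 xA; rewrite (bigD1 x) //= lerDl sumr_ge0. Qed.

Section Greedy.
Variables (R : realFieldType) (K L N T J : nat) (I : finType).
Variable grp : 'I_K -> 'I_L.
Variable beta : 'I_J -> {set 'I_K} * {set 'I_N} -> R.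
Variable alpha : I -> {set 'I_K} * {set 'I_N} -> bool.

Local Notation pairT := (pairT K N).
Local Notation conflict := (conflict grp alpha).
Local Notation feasible := (feasible T grp beta alpha).
Local Notation valid := (valid_pair T grp).

Lemma maxbeta_ge0 (x : pairT) : 0 <= maxbeta beta x.
Proof. by rewrite /maxbeta; elim/big_rec: _ => //= i a _ ha; rewrite le_max ha orbT. Qed.

Lemma maxbeta_ge q (x : pairT) : beta q x <= maxbeta beta x.
Proof. by rewrite /maxbeta (bigD1 q) //= le_max lexx. Qed.

Lemma posp_ge0 (a : R) : 0 <= posp a.
Proof. by rewrite /posp le_max lexx orbT. Qed.

Lemma posp_id (a : R) : 0 <= a -> posp a = a.
Proof. by move=> a_ge0; rewrite /posp max_l. Qed.

Lemma ind_ge0 b : 0 <= ind R b.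
Proof. by case: b; rewrite /ind ?ler01. Qed.

Lemma p1step_ge0 (f : pairT -> R) s x : 0 <= p1step grp beta alpha f s x.
Proof.
rewrite /p1step; case: ifP => _; first by rewrite mulr_ge0 ?posp_ge0 ?ind_ge0.
by rewrite !mulr_ge0 ?posp_ge0 ?ind_ge0 ?maxbeta_ge0 ?ler0n.
Qed.

Lemma p1step_conflict (f : pairT -> R) s x :
  0 < f s -> 0 < f x -> conflict x s -> p1step grp beta alpha f s x = f s.
Proof.
by move=> fs_gt0 fx_gt0 cxs; rewrite /p1step cxs posp_id ?ltW // fx_gt0 /ind mulr1.
Qed.

Lemma p1step_free (f : pairT -> R) s x :
  0 < f s -> 0 < f x -> ~~ conflict x s ->
  p1step grp beta alpha f s x = 2%:R * f s * maxbeta beta x.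
Proof.
move=> fs_gt0 fx_gt0 /negbTE ncxs.
by rewrite /p1step ncxs posp_id ?ltW // fx_gt0 /ind mulr1.
Qed.

(* A valid pair conflicts with itself: its user set meets some group. *)
Lemma conflict_self (x : pairT) : valid x -> conflict x x.
Proof.
case/andP=> /and3P[/set0Pn[u Hu] _ _] _.
apply/orP; left; apply/existsP; exists (grp u); rewrite andbb.
by apply/existsP; exists u; rewrite Hu eqxx.
Qed.

Lemma feasible0 : feasible set0.
Proof.
have empty_sel (P : pred pairT) : (#|[set x in set0 | P x]| <= 1)%N.
  by rewrite (_ : [set _ in _ | _] = set0) ?cards0 //; apply/setP => x; rewrite !inE.
apply/and5P; split; apply/forallP => i; rewrite ?inE ?empty_sel //.
by rewrite big_set0 ler01.
Qed.

Lemma feasible_add (F : {set pairT}) y :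
  feasible F -> valid y -> (forall x, x \in F -> ~~ conflict x y) ->
  (forall q, beta q y + \sum_(x in F) beta q x <= 1) -> feasible (y |: F).
Proof.
case/and5P=> F_valid F_grp F_rb F_beta F_alpha y_valid noconf y_beta.
have yF : y \notin F.
  by apply/negP => /noconf; rewrite conflict_self.
apply/and5P; split.
- apply/forall_inP => x; rewrite in_setU1 => /orP[/eqP->//|]; exact: (forall_inP F_valid).
- apply/forallP => s; apply: card_setU1_le1 (forallP F_grp s) => ys x xF.
  apply: contra (noconf x xF) => xs; apply/orP; left.
  by apply/existsP; exists s; rewrite xs ys.
- apply/forallP => i; apply: card_setU1_le1 (forallP F_rb i) => yi x xF.
  apply: contra (noconf x xF) => xi; apply/orP; right; apply/orP; left.
  by apply/existsP; exists i; rewrite xi yi.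
- by apply/forallP => q; rewrite big_setU1 //= y_beta.
- apply/forallP => q; apply: card_setU1_le1 (forallP F_alpha q) => yq x xF.
  apply: contra (noconf x xF) => xq; apply/orP; right; apply/orP; right.
  by apply/existsP; exists q; rewrite xq yq.
Qed.

Lemma blocking_weight (F : {set pairT}) y :
  feasible F -> narrow T grp beta y -> (forall x, x \in F -> ~~ conflict x y) ->
  ~~ feasible (y |: F) -> exists q, 1 / 2%:R < \sum_(x in F) beta q x.
Proof.
move=> feasF /andP[y_valid /forallP y_narrow] noconf infeas.
apply/existsP; apply: contraNT infeas => /existsPn light.
apply: feasible_add => // q; have := y_narrow q; have := light q.
by rewrite -leNgt; lra.
Qed.

Variables (p : pairT -> R) (sel : nat -> pairT).

Local Notation p2 := (p2 grp p beta alpha sel).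
Local Notation stk := (stk T grp p beta alpha sel).
Local Notation Sstar := (Sstar T grp p beta alpha sel).
Local Notation S_nonempty := (S_nonempty grp p beta alpha sel).

Lemma p2_nonincreasing a b x : (a <= b)%N -> p2 b x <= p2 a x.
Proof.
move/subnKC <-; elim: (b - a)%N => [|d IH]; first by rewrite addn0.
by rewrite addnS /=; apply: le_trans IH; rewrite lerBlDr lerDl p1step_ge0.
Qed.

(* Pushes only happen when feasibility is preserved. *)
Lemma stk_feasible m : feasible (stk m).
Proof. by elim: m => [|m IH] /=; [exact: feasible0 | case: ifP => // /andP[]]. Qed.

Lemma stk_selected m x : (m <= N)%N -> x \in stk m ->
  exists k, [/\ (N - m < k <= N)%N, x = sel k & S_nonempty k].
Proof.
elim: m => [|m IH] leN /=; first by rewrite inE.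
have later : x \in stk m -> exists k, [/\ (N - m.+1 < k <= N)%N, x = sel k & S_nonempty k].
  by move=> /(IH (ltnW leN)) [k [kb -> nek]]; exists k; split => //; lia.
case: ifP => [/andP[neS _]|_]; last exact: later.
rewrite in_setU1 => /orP[/eqP->|]; last exact: later.
by exists (N - m)%N; split => //; lia.
Qed.

Lemma Sstar_step j : (1 <= j <= N)%N ->
  Sstar j.-1 = if S_nonempty j && feasible (sel j |: Sstar j)
               then sel j |: Sstar j else Sstar j.
Proof.
move=> jb; rewrite /Sstar (_ : (N - j.-1 = (N - j).+1)%N); last lia.
by rewrite /= (_ : (N - (N - j) = j)%N) //; lia.
Qed.

Lemma p2_pos_on_Sstar j x : (1 <= j <= N)%N -> x \in Sstar j -> 0 < p2 j.-1 x.
Proof.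
move=> jb /stk_selected [|k [kb -> nek]]; first lia.
by apply: lt_le_trans nek (p2_nonincreasing _ _); lia.
Qed.

End Greedy.

Theorem lemma1 (R : realFieldType) (K L N T J : nat) (I : finType)
  (grp : 'I_K -> 'I_L)
  (p : {set 'I_K} * {set 'I_N} -> R)
  (beta : 'I_J -> {set 'I_K} * {set 'I_N} -> R)
  (alpha : I -> {set 'I_K} * {set 'I_N} -> bool)
  (sel : nat -> {set 'I_K} * {set 'I_N})
  (hp : forall x, valid_pair T grp x -> 0 <= p x)
  (hbeta : forall q x, valid_pair T grp x -> 0 <= beta q x <= 1)
  (hsel : forall j, (1 <= j <= N)%N ->
     [/\ narrow T grp beta (sel j),
         tail (sel j).2 = j &
         forall x, narrow T grp beta x -> tail x.2 = j ->
           p2 grp p beta alpha sel j.-1 x <= p2 grp p beta alpha sel j.-1 (sel j)])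
  (j : nat) (hj : (1 <= j <= N)%N)
  (hSj : S_nonempty grp p beta alpha sel j) :
  p2 grp p beta alpha sel j.-1 (sel j)
    <= \sum_(x in Sstar T grp p beta alpha sel j.-1) p1 grp p beta alpha sel j x.
Proof.
have [s_narrow _ _] := hsel j hj.
have s_valid : valid_pair T grp (sel j) by case/andP: s_narrow.
set f := p2 grp p beta alpha sel j.-1.
set S := Sstar T grp p beta alpha sel j.
have fs_gt0 : 0 < f (sel j) by [].
have f_pos : forall x, x \in S -> 0 < f x by move=> x; exact: p2_pos_on_Sstar.
have p1_ge0 : forall x, 0 <= p1 grp p beta alpha sel j x by move=> x; exact: p1step_ge0.
rewrite Sstar_step // hSj /=; case: ifP => [_ | infeas].
  apply: le_trans (ler_sum_mem p1_ge0 (setU11 _ _)).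
  by rewrite /p1 (p1step_conflict beta fs_gt0 fs_gt0 (conflict_self alpha s_valid)).
have [/exists_inP[x xS cxs] | /exists_inPn noconf] :=
  boolP [exists x in S, conflict grp alpha x (sel j)].
  apply: le_trans (ler_sum_mem p1_ge0 xS).
  by rewrite /p1 (p1step_conflict beta fs_gt0 (f_pos x xS) cxs).
have S_feasible : feasible T grp beta alpha S by exact: stk_feasible.
have [q heavy] := blocking_weight S_feasible s_narrow noconf (negbT infeas).
apply: le_trans (_ : 2%:R * f (sel j) * \sum_(x in S) beta q x <= _); first by nra.
rewrite mulr_sumr; apply: ler_sum => x xS.
rewrite /p1 (p1step_free beta fs_gt0 (f_pos x xS) (noconf x xS)).
by rewrite ler_wpM2l ?maxbeta_ge // mulr_ge0 ?ler0n ?ltW.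
Qed.
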